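(* Let $f\colon\mathbb Z^m\to\mathbb Q\cup\{\infty\}$ be SBO jump M-convex. Let $r\in\mathbb Z^m$, let $z^{(1)},z^{(2)}\in\mathbb Z^m$ with $z^{(1)},z^{(2)}\equiv r\pmod 2$, and let $i^*\in[m]$ satisfy $z^{(1)}_{i^*}-z^{(2)}_{i^*}\ge2$. Then there exist $z^{(1)\prime},z^{(2)\prime}\in\mathbb Z^m$ such that: - $z^{(1)\prime},z^{(2)\prime}\equiv r\pmod2$; - $z^{(1)\prime}+z^{(2)\prime}=z^{(1)}+z^{(2)}$; - $z^{(1)\prime}_{i^*}=z^{(1)}_{i^*}-2$ and $z^{(2)\prime}_{i^*}=z^{(2)}_{i^*}+2$; - for all $i\in[m]$, if $z^{(1)}_i=z^{(2)}_i$ then $z^{(1)}_i=z^{(1)\prime}_i=z^{(2)\prime}_i=z^{(2)}_i$; - $f(z^{(1)\prime})+f(z^{(2)\prime})\le f(z^{(1)})+f(z^{(2)})$.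
   Context: For $x,y\in\mathbb Z^m$, write $x\sqsubseteq y$ if $|x_i|\le|y_i|$ and $x_iy_i\ge0$ for all $i$. A $2$-step decomposition of $d\in\mathbb Z^m$ is a multiset $p^{(1)},\dots,p^{(\ell)}\in\mathbb Z^m$ with $\|p^{(k)}\|_1=2$ and $p^{(k)}\sqsubseteq d$ for all $k$, and $d=\sum_kp^{(k)}$. $f$ is SBO jump M-convex if the following holds for all $z^{(1)},z^{(2)}$ with finite $f$-values. There must exist a $2$-step decomposition $p^{(1)},\dots,p^{(\ell)}$ of $z^{(2)}-z^{(1)}$ and reals $g^{(1)},\dots,g^{(\ell)}$ such that: - $f(z^{(2)})=f(z^{(1)})+\sum_kg^{(k)}$; - $f(z^{(1)}+\sum_{k\in I}p^{(k)})\le f(z^{(1)})+\sum_{k\in I}g^{(k)}$ for all $I\subseteq[\ell]$. Congruence modulo $2$ is componentwise. *)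

From HB Require Import structures.
From mathcomp Require Import all_boot all_order all_algebra.
From mathcomp Require Import reals.
Set Implicit Arguments. Unset Strict Implicit. Unset Printing Implicit Defensive.
Import Order.TTheory GRing.Theory Num.Theory.
Local Open Scope ring_scope.

Notation zvec m := {ffun 'I_m -> int}.

(* Q ∪ {∞}: None encodes ∞. *)
Definition qinf := option rat.

Definition qinf_add (x y : qinf) : qinf :=
  match x, y with Some a, Some b => Some (a + b) | _, _ => None end.

Definition qinf_le (x y : qinf) : bool :=
  match x, y with
  | _, None => true
  | None, Some _ => false
  | Some a, Some b => a <= b
  end.

Definition qinf_leR (R : realType) (x : qinf) (y : R) : Prop :=
  match x with Some a => ratr a <= y | None => False end.

Definition sqsub m (x y : zvec m) : Prop :=
  forall i, `|x i| <= `|y i| /\ 0 <= x i * y i.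

Definition l1norm m (x : zvec m) : int := \sum_i `|x i|.

Definition two_step_decomp m (d : zvec m) (l : nat) (p : 'I_l -> zvec m) : Prop :=
  (forall k, l1norm (p k) = 2 /\ sqsub (p k) d) /\ \sum_(k < l) p k = d.

Definition SBO_jump_Mconvex (R : realType) m (f : zvec m -> qinf) : Prop :=
  forall (z1 z2 : zvec m) (a1 a2 : rat), f z1 = Some a1 -> f z2 = Some a2 ->
  exists (l : nat) (p : 'I_l -> zvec m) (g : 'I_l -> R),
    [/\ two_step_decomp (z2 - z1) p,
        ratr a2 = ratr a1 + \sum_(k < l) g k &
        forall I : {set 'I_l},
          qinf_leR (f (z1 + \sum_(k in I) p k)) (ratr a1 + \sum_(k in I) g k)].

Definition congr_mod2 m (x y : zvec m) : Prop :=
  forall i, (x i = y i %[mod 2])%Z.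

From HB Require Import structures.
From mathcomp Require Import all_boot all_order all_algebra.
From mathcomp Require Import reals.
From mathcomp Require Import zify lra.
Import Order.TTheory GRing.Theory Num.Theory.
Set Implicit Arguments. Unset Strict Implicit. Unset Printing Implicit Defensive.

(* If f(z1) or f(z2) is infinite, moving two units at i* alone works.  Otherwise
   let p_1, ..., p_l be a 2-step decomposition of z2 - z1 as in the definition of
   SBO jump M-convexity and write p(I) for the sum over an index set I.  Adding the
   inequalities for I and for its complement gives
   f(z1 + p(I)) + f(z2 - p(I)) <= f(z1) + f(z2) for every I, and p(I) vanishes
   wherever z1 = z2, so it suffices to find I with p(I) even and p(I)_i* = -2.
   Either some p_k equals -2 e_i*, or every p_k has i*-entry 0 or -1.  In the latter
   case the odd supports of the p_k are the edges (of size 0 or 2) of a multigraph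
   on [m] in which every degree is even, because z2 - z1 is even, and i* is not
   isolated; the edge set of a cycle through i*, obtained by extending a path from
   i* until it closes, is the required I. *)

Section EvenCycle.

Variables (K T : finType) (E : K -> {set T}).

Definition degree (I : {set K}) (x : T) : nat := \sum_(k in I) (x \in E k).

Definition boundary (I : {set K}) : {set T} := [set x | odd (degree I x)].

Lemma in_boundaryU1 (I : {set K}) k x : k \notin I ->
  (x \in boundary (k |: I)) = (x \in E k) (+) (x \in boundary I).
Proof. by move=> kI; rewrite !inE /degree big_setU1 //= oddD oddb. Qed.

Hypotheses (E_even : forall k, ~~ odd #|E k|) (E_le2 : forall k, #|E k| <= 2).
Hypothesis boundaryT : boundary setT = set0.

Lemma in_boundaryC (I : {set K}) x : (x \in boundary (~: I)) = (x \in boundary I).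
Proof.
have /setP/(_ x) := boundaryT; rewrite !inE /degree (big_setID I) /= setTI setTD.
by rewrite oddD => /negbT; case: odd; case: odd.
Qed.

Lemma edge_through k a : a \in E k -> exists2 b, b != a & E k = [set a; b].
Proof.
move=> aE; have /cards2P [x [y [xy Exy]]] : #|E k| == 2.
  have : 0 < #|E k| by apply/card_gt0P; exists a.
  by move: (E_even k) (E_le2 k); case: #|E k| => [|[|[|]]].
move: aE; rewrite Exy !inE => /orP [] /eqP ->.
- by exists y; rewrite // eq_sym.
- by exists x; rewrite // setUC.
Qed.

Lemma boundary_edge (I : {set K}) x : x \in boundary I -> exists2 k, k \in I & x \in E k.
Proof.
move=> xI; apply/exists_inP; apply: contraTT xI => /exists_inPn noedge.
by rewrite inE /degree big1 // => k /noedge /negbTE ->.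
Qed.

Variable v : T.

Lemma path_to_cycle n (I : {set K}) a : #|~: I| <= n -> a != v ->
    boundary I = [set v; a] -> degree I v = 1 ->
  exists J, boundary J = set0 /\ degree J v = 2.
Proof.
(* The free endpoint a of the path is odd in the complement too, so an unused edge leaves it. *)
elim: n I a => [|n IH] I a sizeI av bI dI;
  have [k kI aEk] : exists2 k, k \in ~: I & a \in E k
    by apply: boundary_edge; rewrite in_boundaryC bI !inE eqxx orbT.
  by move: sizeI; rewrite leqn0 cards_eq0 => /eqP I0; rewrite I0 inE in kI.
have kNI : k \notin I by rewrite inE in kI.
have [b ba Ek] := edge_through aEk.
have dkI : degree (k |: I) v = (v \in E k) + 1 by rewrite -dI /degree big_setU1.
have [bv|bv] := eqVneq b v.
  exists (k |: I); split; last by rewrite dkI Ek bv !inE eqxx orbT.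
  apply/setP => x; rewrite in_boundaryU1 // Ek bI bv !inE.
  by rewrite orbC addbb.
apply: (IH (k |: I) b) => //.
- have -> : ~: (k |: I) = ~: I :\ k by apply/setP => x; rewrite !inE negb_or.
  by move: sizeI; rewrite (cardsD1 k (~: I)) kI.
- apply/setP => x; rewrite in_boundaryU1 // Ek bI !inE.
  have [->|xv] := eqVneq x v; first by rewrite eq_sym (negbTE av) eq_sym (negbTE bv).
  have [->|xa] := eqVneq x a; last by case: (x == b).
  by rewrite eq_sym (negbTE ba).
- by rewrite dkI Ek !inE eq_sym (negbTE av) eq_sym (negbTE bv).
Qed.

Lemma cycle_through : (exists k, v \in E k) ->
  exists J, boundary J = set0 /\ degree J v = 2.
Proof.
case=> k vEk; have [a av Ek] := edge_through vEk.
have dk x : degree [set k] x = (x \in E k) by rewrite /degree big_set1.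
apply: (@path_to_cycle #|~: [set k]| [set k] a) => //; last by rewrite dk vEk.
by apply/setP => x; rewrite inE dk oddb Ek.
Qed.

End EvenCycle.

Local Open Scope ring_scope.

Lemma dvdz2_sum (K : finType) (P : pred K) (F : K -> int) :
  (2 %| \sum_(k | P k) F k)%Z = ~~ odd (\sum_(k | P k) ~~ (2 %| F k)%Z)%N.
Proof.
elim/big_rec2: _ => [|k y1 y2 _ IH] //=.
by move: IH; rewrite oddD; case: (boolP (2 %| F k)%Z) => /= Fk; lia.
Qed.

Definition odd_support m (x : zvec m) : {set 'I_m} := [set i | ~~ (2 %| x i)%Z].

Lemma card_odd_support m (x : zvec m) :
  #|odd_support x| = (\sum_i ~~ (2 %| x i)%Z)%N.
Proof. by rewrite -sum1dep_card big_mkcond; apply: eq_bigr => i _; case: ifP. Qed.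

Lemma card_odd_support_le m (x : zvec m) : (#|odd_support x|)%:Z <= l1norm x.
Proof.
rewrite card_odd_support -natz natr_sum; apply: ler_sum => i _.
by case: (boolP (2 %| x i)%Z) => /= xi; lia.
Qed.

Lemma card_odd_support_even m (x : zvec m) :
  (2 %| l1norm x)%Z -> ~~ odd #|odd_support x|.
Proof.
rewrite /l1norm (dvdz2_sum xpredT) card_odd_support.
have <- // : (\sum_i ~~ (2 %| `|x i|%R)%Z = \sum_i ~~ (2 %| x i)%Z)%N.
by apply: eq_bigr => i _; congr (nat_of_bool (~~ _)); apply/idP/idP; lia.
Qed.

Lemma normz_le_l1norm m (x : zvec m) i : `|x i| <= l1norm x.
Proof. by rewrite /l1norm (bigD1 i) //= lerDl sumr_ge0. Qed.

Lemma l1norm_concentrated m (x : zvec m) i j :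
  `|x i| = l1norm x -> j != i -> x j = 0.
Proof.
move=> + ji; rewrite /l1norm (bigD1 i) //= (bigD1 j) //= => xi.
set S := \sum_(_ < m | _) _ in xi.
have : 0 <= S by rewrite sumr_ge0.
lia.
Qed.

Lemma sqsub_eq0 m (x y : zvec m) i : sqsub x y -> y i = 0 -> x i = 0.
Proof. by move=> /(_ i) [xy _] yi; move: xy; rewrite yi normr0; lia. Qed.

Section EvenSubsum.

Variables (m l : nat) (d : zvec m) (p : 'I_l -> zvec m) (i0 : 'I_m).
Hypotheses (p_norm : forall k, l1norm (p k) = 2) (p_sub : forall k, sqsub (p k) d).
Hypotheses (p_sum : \sum_(k < l) p k = d) (d_even : forall i, (2 %| d i)%Z).
Hypothesis d_i0 : d i0 <= -2.

Lemma two_step_entry k : [\/ p k i0 = 0, p k i0 = -1 | p k i0 = -2].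
Proof.
have := normz_le_l1norm (p k) i0; have [_ sign] := p_sub k i0; rewrite p_norm.
move: sign d_i0; move: (p k i0) (d i0) => x y xy y2 x2.
have : x = 0 \/ x = -1 \/ x = -2 by nia.
by case=> [->|[->|->]]; constructor.
Qed.

Lemma even_subsum : exists I : {set 'I_l},
  (forall i, (2 %| (\sum_(k in I) p k) i)%Z) /\ (\sum_(k in I) p k) i0 = -2.
Proof.
have [k /eqP pk2 | no_minus2] := pickP (fun k => p k i0 == -2).
  exists [set k]; rewrite big_set1; split => // i.
  have [-> | ii0] := eqVneq i i0; first by rewrite pk2.
  by rewrite (@l1norm_concentrated _ _ i0) ?p_norm ?pk2.
have unit_entry k : p k i0 = 0 \/ p k i0 = -1.
  case: (two_step_entry k) => [||pk2]; [by left | by right |].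
  by move: (no_minus2 k); rewrite pk2 eqxx.
pose E k := odd_support (p k).
have degreeE I i : degree E I i = (\sum_(k in I) ~~ (2 %| p k i)%Z)%N.
  by apply: eq_bigr => k _; rewrite inE.
have [||||I [bI dI]] := @cycle_through _ _ E _ _ _ i0.
- by move=> k; apply: card_odd_support_even; rewrite p_norm.
- by move=> k; have := card_odd_support_le (p k); rewrite p_norm /E; lia.
- apply/setP => i; rewrite !inE degreeE; apply/negbTE; rewrite -dvdz2_sum.
  under eq_bigl do rewrite in_setT.
  by have := d_even i; rewrite -p_sum sum_ffunE.
- have [k i0k | none] := pickP (fun k => i0 \in E k); first by exists k.
  move: d_i0; rewrite -p_sum sum_ffunE big1 // => k _.
  by move: (none k); rewrite /= inE; case: (unit_entry k) => ->.
exists I; split => [i|].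
  by rewrite sum_ffunE dvdz2_sum -degreeE; have /setP/(_ i) := bI; rewrite !inE => ->.
rewrite sum_ffunE (eq_bigr (fun k => - (~~ (2 %| p k i0)%Z)%:R)); last first.
  by move=> k _; case: (unit_entry k) => ->.
by rewrite sumrN -natr_sum -degreeE dI.
Qed.

End EvenSubsum.

Lemma SBO_exchange (R : realType) m (f : zvec m -> qinf) (z1 z2 : zvec m) a1 a2 :
    SBO_jump_Mconvex R f -> f z1 = Some a1 -> f z2 = Some a2 ->
  exists l (p : 'I_l -> zvec m), two_step_decomp (z2 - z1) p /\
    forall I : {set 'I_l},
      qinf_le (qinf_add (f (z1 + \sum_(k in I) p k)) (f (z2 - \sum_(k in I) p k)))
              (qinf_add (f z1) (f z2)).
Proof.
move=> hf E1 E2; have [l [p [g [[hp p_sum] g_sum g_bound]]]] := hf _ _ _ _ E1 E2.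
exists l, p; split=> // I.
have split_sum (V : zmodType) (F : 'I_l -> V) :
    \sum_k F k = \sum_(k in I) F k + \sum_(k in ~: I) F k.
  by rewrite (bigID (mem I)); congr (_ + _); apply: eq_bigl => k; rewrite ?inE.
have -> : z2 - \sum_(k in I) p k = z1 + \sum_(k in ~: I) p k.
  by rewrite -[z2](subrK z1) -p_sum (split_sum _ p) addrC -!addrA addKr addrC.
have := g_bound I; have := g_bound (~: I); rewrite E1 E2 /qinf_leR.
case: (f (z1 + _)) => [b1|] //; case: (f (z1 + _)) => [b2|] // hb2 hb1 /=.
by rewrite -(ler_rat R) !rmorphD /=; move: g_sum; rewrite (split_sum _ g); lra.
Qed.

Theorem lemma18 (R : realType) (m : nat) (f : zvec m -> qinf)
  (hf : SBO_jump_Mconvex R f) (r z1 z2 : zvec m)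
  (h1 : congr_mod2 z1 r) (h2 : congr_mod2 z2 r) (istar : 'I_m)
  (hi : 2 <= z1 istar - z2 istar) :
  exists z1' z2' : zvec m,
    [/\ congr_mod2 z1' r /\ congr_mod2 z2' r,
        z1' + z2' = z1 + z2,
        z1' istar = z1 istar - 2 /\ z2' istar = z2 istar + 2,
        (forall i, z1 i = z2 i ->
           [/\ z1 i = z1' i, z1' i = z2' i & z2' i = z2 i]) &
        qinf_le (qinf_add (f z1') (f z2')) (qinf_add (f z1) (f z2))].
Proof.
suff [P [P_even P_istar P_fix P_le]] : exists P : zvec m,
    [/\ forall i, (2 %| P i)%Z, P istar = -2, forall i, z1 i = z2 i -> P i = 0 &
        qinf_le (qinf_add (f (z1 + P)) (f (z2 - P))) (qinf_add (f z1) (f z2))].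
  exists (z1 + P), (z2 - P); split => //.
  - split=> i; rewrite !ffunE; move: (h1 i) (h2 i) (P_even i);
      move: (z1 i) (z2 i) (P i) (r i) => a b c d; lia.
  - by rewrite addrACA subrr addr0.
  - by rewrite !ffunE P_istar opprK.
  - by move=> i e; rewrite !ffunE P_fix // e subr0 ?addr0.
have [[[a1 E1] [a2 E2]] | infinite] :
    ((exists a1, f z1 = Some a1) /\ exists a2, f z2 = Some a2) \/
    qinf_add (f z1) (f z2) = None.
  by case: (f z1) (f z2) => [a1|] [a2|]; [left; split; eexists | right ..].
  have [l [p [[p_two p_sum] p_le]]] := SBO_exchange hf E1 E2.
  have [||I [I_even I_istar]] :=
    @even_subsum _ _ _ _ istar (fun k => (p_two k).1) (fun k => (p_two k).2) p_sum.
  - by move=> i; rewrite !ffunE; move: (h1 i) (h2 i); move: (z1 i) (z2 i) (r i); lia.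
  - by rewrite !ffunE; move: hi; move: (z1 istar) (z2 istar); lia.
  exists (\sum_(k in I) p k); split=> // i e.
  by rewrite sum_ffunE big1 // => k _; apply: sqsub_eq0 (p_two k).2 _; rewrite !ffunE e subrr.
exists [ffun i => if i == istar then -2 else 0]; split; rewrite ?ffunE ?eqxx ?infinite //.
- by move=> i; rewrite ffunE; case: ifP.
- move=> i e; rewrite ffunE; case: eqP => // ii.
  by move: hi; rewrite -ii e subrr.
- by case: qinf_add.
Qed.
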